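(* Let $(M,d)$ be a metric space having an accumulation point, and let $0<c<1$. Then there exists a distance $\overline d$ on $M$ with $c\,d\leq\overline d\leq d$ such that the Weak Besicovitch Covering Property (and hence BCP) does not hold for $\overline d$.
   Context: Balls are closed, $B_d(p,r)=\{q:d(q,p)\le r\}$, with fixed center and radius. A family of Besicovitch balls is a finite family $\{B_d(x_B,r_B)\}$ of balls such that $x_B\notin B'$ for all distinct $B,B'$ in the family and the intersection of all its balls is nonempty. w-BCP holds for $d$ if there is an integer $N\ge1$ such that every family of Besicovitch balls has cardinality at most $N$. BCP holds for $d$ if there is $N\geq1$ such that for every bounded $A\subset M$ and every family $\mathcal B$ of balls such that each point of $A$ is the center of some ball of $\mathcal B$, there is a subfamily $\mathcal F\subset\mathcal B$ with $\chi_A\leq\sum_{B\in\mathcal F}\chi_B\leq N$. *)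

From Stdlib Require Import Reals List.
Open Scope R_scope.

Definition is_metric {M : Type} (d : M -> M -> R) : Prop :=
  (forall x y, 0 <= d x y) /\
  (forall x y, d x y = 0 <-> x = y) /\
  (forall x y, d x y = d y x) /\
  (forall x y z, d x z <= d x y + d y z).

Definition accumulation_point {M : Type} (d : M -> M -> R) (p : M) : Prop :=
  forall eps, 0 < eps -> exists q, q <> p /\ d q p < eps.

(* A ball is given by its center and radius (fixed center and radius);
   closed ball B_d(x,r) = {q : d q x <= r}. Radii are positive. *)
Definition ball (M : Type) : Type := (M * R)%type.

Definition in_ball {M : Type} (d : M -> M -> R) (B : ball M) (q : M) : Prop :=
  d q (fst B) <= snd B.

Definition besicovitch_family {M : Type} (d : M -> M -> R) (F : list (ball M)) : Prop :=
  NoDup F /\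
  (forall B, In B F -> 0 < snd B) /\
  (forall B B', In B F -> In B' F -> B <> B' -> ~ in_ball d B' (fst B)) /\
  (exists z, forall B, In B F -> in_ball d B z).

Definition wBCP {M : Type} (d : M -> M -> R) : Prop :=
  exists N : nat, (1 <= N)%nat /\
    forall F, besicovitch_family d F -> (length F <= N)%nat.

(* A (possibly infinite) family of balls is a
   predicate on balls.  The condition  sum_{B in F} chi_B <= N  is stated as:
   every point belongs to at most N distinct balls of F. *)
Definition BCP {M : Type} (d : M -> M -> R) : Prop :=
  exists N : nat, (1 <= N)%nat /\
    forall (A : M -> Prop) (Fam : ball M -> Prop),
      (exists p Rad, forall a, A a -> d a p <= Rad) ->
      (forall B, Fam B -> 0 < snd B) ->
      (forall a, A a -> exists r, Fam (a, r)) ->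
      exists Sub : ball M -> Prop,
        (forall B, Sub B -> Fam B) /\
        (forall a, A a -> exists B, Sub B /\ in_ball d B a) /\
        (forall x (l : list (ball M)), NoDup l ->
           (forall B, In B l -> Sub B /\ in_ball d B x) -> (length l <= N)%nat).

(** Pinch the metric at an accumulation point [p]:
    [dbar x y = min (d x y) (c (d x p + d y p))].  For [dbar], the ball
    centred at [q] of radius [c d(q,p)] contains [p].  If [q_1, q_2, ...] tend
    to [p] fast enough, namely [d(q_(k+1),p) < (1-c) d(q_k,p)], each [q_j] lies
    outside the balls centred at the other points, so these balls form
    arbitrarily large Besicovitch families with common point [p].  BCP implies
    w-BCP: apply it to the set of centres of a Besicovitch family, each of which
    is covered only by its own ball. *)

From Stdlib Require Import Reals List RList Lra Psatz FinFun Classical.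
Open Scope R_scope.

Section Metric.

Context {M : Type} {d : M -> M -> R}.
Hypothesis Hd : is_metric d.

Lemma dist_self (x : M) : d x x = 0.
Proof. destruct Hd as [_ [Hzero _]]; apply Hzero; reflexivity. Qed.

Lemma dist_pos (x y : M) : x <> y -> 0 < d x y.
Proof.
  destruct Hd as [Hpos [Hzero _]]; intro Hxy.
  destruct (Hpos x y) as [H|H]; [exact H|].
  exfalso; apply Hxy, Hzero; symmetry; exact H.
Qed.

End Metric.

Definition pinched {M : Type} (d : M -> M -> R) (p : M) (c : R) (x y : M) : R :=
  Rmin (d x y) (c * (d x p + d y p)).

Lemma Rmin_cases (a b : R) : Rmin a b = a \/ Rmin a b = b.
Proof. apply Rmin_case; [left|right]; reflexivity. Qed.

Section Pinched.

Context {M : Type} (d : M -> M -> R) (p : M) (c : R).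
Hypothesis Hd : is_metric d.
Hypothesis Hc : 0 < c <= 1.

Lemma pinched_bounds (x y : M) : c * d x y <= pinched d p c x y <= d x y.
Proof.
  destruct Hd as [Hpos [_ [Hsym Htri]]].
  split; [|apply Rmin_l].
  pose proof (Hpos x y); pose proof (Htri x p y); rewrite (Hsym p y) in *.
  apply Rmin_glb; nra.
Qed.

Lemma pinched_triangle (x y z : M) :
  pinched d p c x z <= pinched d p c x y + pinched d p c y z.
Proof.
  destruct Hd as [Hpos [_ [Hsym Htri]]].
  assert (Hshrink : forall u v, c * d u v <= d u v).
  { intros u v; pose proof (Hpos u v); nra. }
  assert (Hvia : forall u v, c * d u p <= d u v + c * d v p).
  { intros u v; pose proof (Htri u v p); pose proof (Hshrink u v); nra. }
  pose proof (Htri x y z); pose proof (Hvia x y); pose proof (Hvia z y).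
  rewrite (Hsym z y) in *; pose proof (Hpos y p).
  pose proof (Rmin_l (d x z) (c * (d x p + d z p))).
  pose proof (Rmin_r (d x z) (c * (d x p + d z p))).
  unfold pinched.
  destruct (Rmin_cases (d x y) (c * (d x p + d y p))) as [->| ->];
  destruct (Rmin_cases (d y z) (c * (d y p + d z p))) as [->| ->]; nra.
Qed.

Lemma pinched_metric : is_metric (pinched d p c).
Proof.
  pose proof pinched_bounds as Hb.
  destruct Hd as [Hpos [Hzero [Hsym _]]].
  split; [|split; [|split]].
  - intros x y; pose proof (Hpos x y); pose proof (Hb x y); nra.
  - intros x y; split.
    + intro E; apply Hzero; pose proof (Hpos x y); pose proof (Hb x y); nra.
    + intros <-; pose proof (Hpos x x); pose proof (Hb x x); rewrite (dist_self Hd) in *; lra.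
  - intros x y; unfold pinched; rewrite (Hsym x y), (Rplus_comm (d x p)); reflexivity.
  - exact pinched_triangle.
Qed.

Definition ball_through_pinch (q : M) : ball M := (q, c * d q p).

Lemma ball_through_pinch_contains (q : M) : in_ball (pinched d p c) (ball_through_pinch q) p.
Proof.
  unfold in_ball, ball_through_pinch, pinched; simpl.
  rewrite (dist_self Hd), Rplus_0_l; destruct Hd as [_ [_ [Hsym _]]].
  rewrite (Hsym p q); apply Rmin_r.
Qed.

Definition separated (l : list M) : Prop :=
  forall q q', In q l -> In q' l -> q <> q' -> c * d q' p < d q q'.

Lemma separated_cons (l : list M) (r : R) (q0 : M) :
  separated l -> (forall q, In q l -> r <= d q p) ->
  0 < d q0 p < (1 - c) * r -> separated (q0 :: l).
Proof.
  destruct Hd as [Hpos [_ [Hsym Htri]]].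
  intros Hsep Hfar Hq0.
  assert (Hcloser : forall q, In q l -> d q0 p < d q p).
  { intros q Hq; pose proof (Hfar q Hq); assert (0 < r) by nra; nra. }
  assert (Hnew : forall q, In q l -> c * d q p < d q0 q).
  { intros q Hq; pose proof (Hfar q Hq); pose proof (Htri q q0 p).
    rewrite (Hsym q q0) in *; nra. }
  intros q q' [<-|Hq] [<-|Hq'] Hne.
  - congruence.
  - exact (Hnew q' Hq').
  - pose proof (Hcloser q Hq); pose proof (Hnew q Hq); rewrite (Hsym q q0); nra.
  - exact (Hsep q q' Hq Hq' Hne).
Qed.

Lemma separated_lists_exist :
  accumulation_point d p -> c < 1 ->
  forall n, exists l, length l = n /\ NoDup l /\ ~ In p l /\ separated l.
Proof.
  intros Hacc Hc1 n.
  assert (Hstrong : exists l r, length l = n /\ NoDup l /\ 0 < r /\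
                      (forall q, In q l -> r <= d q p) /\ separated l).
  { induction n as [|n IH].
    - exists nil, 1; repeat split; [constructor | lra | intros q [] | intros q q' []].
    - destruct IH as [l [r [Hlen [Hnd [Hr [Hfar Hsep]]]]]].
      destruct (Hacc ((1 - c) * r)) as [q0 [Hq0p Hq0]]; [nra|].
      pose proof (dist_pos Hd q0 p Hq0p) as Hq0pos.
      exists (q0 :: l), (d q0 p); repeat split.
      + simpl; rewrite Hlen; reflexivity.
      + constructor; [|exact Hnd].
        intro Hin; pose proof (Hfar q0 Hin); nra.
      + exact Hq0pos.
      + intros q [<-|Hq]; [lra|]; pose proof (Hfar q Hq); nra.
      + apply (separated_cons l r); auto. }
  destruct Hstrong as [l [r [Hlen [Hnd [Hr [Hfar Hsep]]]]]].
  exists l; repeat split; auto.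
  intro Hin; pose proof (Hfar p Hin); rewrite (dist_self Hd) in *; lra.
Qed.

Lemma besicovitch_of_separated (l : list M) :
  NoDup l -> ~ In p l -> separated l ->
  besicovitch_family (pinched d p c) (map ball_through_pinch l).
Proof.
  intros Hnd Hp Hsep.
  assert (Hrad : forall q, In q l -> 0 < d q p).
  { intros q Hq; apply (dist_pos Hd); intros ->; contradiction. }
  split; [|split; [|split]].
  - apply Injective_map_NoDup; [|exact Hnd].
    intros a b E; injection E; auto.
  - intros B HB; apply in_map_iff in HB; destruct HB as [q [<- Hq]].
    simpl; pose proof (Hrad q Hq); nra.
  - intros B B' HB HB' Hne; apply in_map_iff in HB, HB'.
    destruct HB as [q [<- Hq]], HB' as [q' [<- Hq']].
    assert (Hqq' : q <> q') by (intros ->; contradiction).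
    unfold in_ball, ball_through_pinch, pinched; simpl; apply Rlt_not_le, Rmin_glb_lt.
    + exact (Hsep q q' Hq Hq' Hqq').
    + pose proof (Hrad q Hq); nra.
  - exists p; intros B HB; apply in_map_iff in HB; destruct HB as [q [<- _]].
    apply ball_through_pinch_contains.
Qed.

End Pinched.

Lemma not_wBCP_of_large_families {M : Type} (d : M -> M -> R) :
  (forall n, exists F, besicovitch_family d F /\ (n <= length F)%nat) -> ~ wBCP d.
Proof.
  intros Hlarge [N [_ HN]].
  destruct (Hlarge (S N)) as [F [HF Hlen]].
  specialize (HN F HF); lia.
Qed.

Lemma BCP_wBCP {M : Type} (d : M -> M -> R) :
  (forall x y, d x y = d y x) -> BCP d -> wBCP d.
Proof.
  intros Hsym [N [HN HBCP]]; exists N; split; [exact HN|].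
  intros F HF; destruct HF as [Hnd [Hpos [Hout [z Hz]]]].
  destruct (HBCP (fun a => exists r, In (a, r) F) (fun B => In B F))
    as [Sub [HSF [Hcover Hmult]]].
  - exists z, (MaxRlist (map snd F)); intros a [r Har].
    rewrite Hsym; apply Rle_trans with r.
    + exact (Hz _ Har).
    + apply MaxRlist_P1, in_map_iff; exists (a, r); auto.
  - exact Hpos.
  - intros a [r Har]; exists r; exact Har.
  - assert (HFSub : forall B, In B F -> Sub B).
    { intros [a r] HB.
      destruct (Hcover a (ex_intro _ r HB)) as [B' [HB' Ha]].
      destruct (classic ((a, r) = B')) as [<-|Hne]; [exact HB'|].
      exfalso; exact (Hout (a, r) B' HB (HSF B' HB') Hne Ha). }
    apply (Hmult z F Hnd); intros B HB; split; auto.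
Qed.

Theorem theorem1p3 (M : Type) (d : M -> M -> R) (c : R) :
  is_metric d ->
  (exists p, accumulation_point d p) ->
  0 < c < 1 ->
  exists dbar : M -> M -> R,
    is_metric dbar /\
    (forall x y, c * d x y <= dbar x y /\ dbar x y <= d x y) /\
    ~ wBCP dbar /\ ~ BCP dbar.
Proof.
  intros Hd [p Hacc] Hc.
  assert (Hc' : 0 < c <= 1) by lra.
  pose proof (pinched_metric d p c Hd Hc') as Hmet.
  assert (Hlarge : forall n, exists F,
             besicovitch_family (pinched d p c) F /\ (n <= length F)%nat).
  { intro n.
    destruct (separated_lists_exist d p c Hd Hc' Hacc (proj2 Hc) n) as [l [Hlen [Hnd [Hp Hsep]]]].
    exists (map (ball_through_pinch d p c) l); split.
    - exact (besicovitch_of_separated d p c Hd Hc' l Hnd Hp Hsep).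
    - rewrite length_map, Hlen; lia. }
  exists (pinched d p c); split; [exact Hmet|]; split.
  - intros x y; exact (pinched_bounds d p c Hd Hc' x y).
  - split; [exact (not_wBCP_of_large_families _ Hlarge)|].
    intro HBCP; apply (not_wBCP_of_large_families _ Hlarge).
    apply BCP_wBCP; [apply Hmet | exact HBCP].
Qed.
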